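(* Let $n\geq 1$ and $d\geq 1$ be integers. Then $d\in A_n$ if and only if $k(n,d)\geq |r(n,d)|+1$.
   Context: A walk is a finite sequence $z_0,z_1,\dots,z_l$ of Gaussian integers with $|z_{j+1}-z_j|=1$ for all $0\le j<l$. For natural numbers $n,d$, $n$ is called $d$-avoidable if there exists a walk $(z_j)$ and indices $r,s$ with $z_r-z_s=n$ such that $z_t-z_u\neq d$ for all indices $t,u$. $A_n$ denotes the set of all $d\in\mathbb{N}$ such that $n$ is not $d$-avoidable. For integers $n$ and $d\ge1$, $k(n,d)$ and $r(n,d)$ are the unique integers with $n=k(n,d)\,d+r(n,d)$ and $r(n,d)\in\left[-\lfloor d/2\rfloor,\ \lceil d/2\rceil-1\right]$. *)

From Stdlib Require Import ZArith List Lia.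
Import ListNotations.
Open Scope Z_scope.

Definition gauss := (Z * Z)%type.

Definition gsub (a b : gauss) : gauss := (fst a - fst b, snd a - snd b).

Definition gnorm2 (z : gauss) : Z := fst z * fst z + snd z * snd z.

Definition gofZ (m : Z) : gauss := (m, 0).

Definition is_walk (w : list gauss) : Prop :=
  w <> [] /\
  forall j : nat, (S j < length w)%nat ->
    gnorm2 (gsub (nth (S j) w (0,0)) (nth j w (0,0))) = 1.

Definition avoidable (n d : Z) : Prop :=
  exists w : list gauss, is_walk w /\
    (exists r s : nat, (r < length w)%nat /\ (s < length w)%nat /\
       gsub (nth r w (0,0)) (nth s w (0,0)) = gofZ n) /\
    (forall t u : nat, (t < length w)%nat -> (u < length w)%nat ->
       gsub (nth t w (0,0)) (nth u w (0,0)) <> gofZ d).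

Definition A (n : Z) (d : Z) : Prop := 1 <= d /\ ~ avoidable n d.

From Stdlib Require Import ZArith Lia List Bool.
Import ListNotations.
Open Scope Z_scope.

(* If k <= |r|, an avoiding walk exists: go from 0 to n column by column,
   column c being the vertical segment between heights G c and G (c + 1), for a
   potential G vanishing at 0 and n + 1 that drops whenever one moves d - 1, d or
   d + 1 to the right inside [0, n + 1].  Then column c + d lies strictly below
   column c, so there is no chord d.  Such a G exists when k <= |r|: it is
   negative on the "ladder" of points reachable from 0 by such moves and
   nonnegative elsewhere, and k <= |r| keeps n - d and n + 1 - d off the ladder.

   Conversely, let |r| < k and take a walk with chord n but no chord d.  Scaling
   it horizontally by k gives a walk with chord k n; a chord n = k d + r of the
   scaled walk would, as |r| < k, come from a chord d of the original one.  This
   contradicts the discrete universal chord theorem: a walk without chord D has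
   no chord j D.  Inductively it suffices that no chord D and no chord J exclude
   the chord J + D, which is a parity argument: the translate by D of the part of
   the walk between a lowest and a highest point separates the horizontal strip
   spanned by the walk; the walk lies to its left, the translate of the walk by
   J + D to its right, so the two cannot meet. *)

Lemma gsub_eq_gofZ (a b : gauss) (D : Z) :
  gsub a b = gofZ D <-> fst a = fst b + D /\ snd a = snd b.
Proof.
  unfold gsub, gofZ. split.
  - intros [= Ex Ey]. lia.
  - intros [Ex Ey]. f_equal; lia.
Qed.

Definition lazy_step (z z' : gauss) : Prop :=
  Z.abs (fst z' - fst z) + Z.abs (snd z' - snd z) <= 1.

Definition lazy_walk (f : nat -> gauss) (N : nat) : Prop :=
  forall i, (i < N)%nat -> lazy_step (f i) (f (S i)).

Definition has_chord (f : nat -> gauss) (N : nat) (D : Z) : Prop :=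
  exists p q, (p <= N)%nat /\ (q <= N)%nat /\ gsub (f p) (f q) = gofZ D.

Definition visits (f : nat -> gauss) (N : nat) (z : gauss) : Prop :=
  exists i, (i <= N)%nat /\ f i = z.

Lemma visits_intro (f : nat -> gauss) (N i : nat) (z : gauss) :
  (i <= N)%nat -> fst (f i) = fst z -> snd (f i) = snd z -> visits f N z.
Proof.
  intros Hi Ex Ey. exists i. split; [exact Hi|].
  rewrite (surjective_pairing (f i)), (surjective_pairing z). f_equal; assumption.
Qed.

Lemma chord_of_visits (f : nat -> gauss) (N : nat) (D x y : Z) :
  visits f N (x + D, y) -> visits f N (x, y) -> has_chord f N D.
Proof.
  intros [p [Hp Ep]] [q [Hq Eq]]. exists p, q. split; [exact Hp|split; [exact Hq|]].
  rewrite Ep, Eq. apply gsub_eq_gofZ. cbn. lia.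
Qed.

Lemma lazy_step_of_unit (z z' : gauss) : gnorm2 (gsub z' z) = 1 -> lazy_step z z'.
Proof.
  unfold gnorm2, gsub, lazy_step; cbn [fst snd].
  generalize (fst z' - fst z) (snd z' - snd z). intros a b H.
  assert (Z.abs a <= a * a) by (destruct (Z.eq_dec a 0); [subst; lia | nia]).
  assert (Z.abs b <= b * b) by (destruct (Z.eq_dec b 0); [subst; lia | nia]).
  destruct (Z.eq_dec a 0), (Z.eq_dec b 0); subst; nia.
Qed.

Lemma avoidable_lazy_walk (n d : Z) : avoidable n d ->
  exists f N, lazy_walk f N /\ has_chord f N n /\ ~ has_chord f N d.
Proof.
  intros [w [[Hne Hstep] [[r [s [Hr [Hs Hrs]]]] Hav]]].
  assert (Hlen : (0 < length w)%nat) by (destruct w; [congruence | cbn; lia]).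
  exists (fun i => nth i w (0, 0)), (length w - 1)%nat. split; [|split].
  - intros i Hi. apply lazy_step_of_unit, Hstep. lia.
  - exists r, s. split; [lia|split; [lia|exact Hrs]].
  - intros [p [q [Hp [Hq Hpq]]]]. exact (Hav p q ltac:(lia) ltac:(lia) Hpq).
Qed.

Lemma avoidable_of_walk (w : list gauss) (a b : gauss) (n d : Z) :
  is_walk w -> In a w -> In b w -> gsub a b = gofZ n ->
  (forall z z', In z w -> In z' w -> gsub z z' <> gofZ d) -> avoidable n d.
Proof.
  intros Hw Ha Hb Hab Hav. exists w. split; [exact Hw|split].
  - apply In_nth with (d := (0, 0)) in Ha as [r [Hr <-]].
    apply In_nth with (d := (0, 0)) in Hb as [s [Hs <-]].
    exists r, s. auto.
  - intros t u Ht Hu. apply Hav; apply nth_In; assumption.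
Qed.

Fixpoint odd_count (P : nat -> bool) (m : nat) : bool :=
  match m with
  | O => false
  | S m' => xorb (odd_count P m') (P m')
  end.

Lemma odd_count_ext (P Q : nat -> bool) (m : nat) :
  (forall i, (i < m)%nat -> P i = Q i) -> odd_count P m = odd_count Q m.
Proof.
  induction m as [|m IH]; intros H; cbn; [reflexivity|].
  rewrite IH by (intros; apply H; lia). rewrite H by lia. reflexivity.
Qed.

Lemma odd_count_false (P : nat -> bool) (m : nat) :
  (forall i, (i < m)%nat -> P i = false) -> odd_count P m = false.
Proof.
  intros H. rewrite (odd_count_ext P (fun _ => false)) by assumption. clear H.
  induction m as [|m IH]; cbn; [|rewrite IH]; reflexivity.
Qed.

Lemma odd_count_xorb (P Q : nat -> bool) (m : nat) :
  odd_count (fun i => xorb (P i) (Q i)) m = xorb (odd_count P m) (odd_count Q m).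
Proof.
  induction m as [|m IH]; cbn; [reflexivity|].
  rewrite IH. destruct (odd_count P m), (odd_count Q m), (P m), (Q m); reflexivity.
Qed.

Lemma odd_count_telescope (b : nat -> bool) (m : nat) :
  odd_count (fun i => xorb (b i) (b (S i))) m = xorb (b O) (b m).
Proof.
  induction m as [|m IH]; cbn; [destruct (b O); reflexivity|].
  rewrite IH. destruct (b O), (b m), (b (S m)); reflexivity.
Qed.

Ltac destruct_Z_tests :=
  repeat match goal with
  | |- context [Z.eqb ?a ?b] => destruct (Z.eqb_spec a b); try (exfalso; lia)
  | |- context [Z.ltb ?a ?b] => destruct (Z.ltb_spec a b); try (exfalso; lia)
  | |- context [Z.leb ?a ?b] => destruct (Z.leb_spec a b); try (exfalso; lia)
  end.

Section RayParity.

Variables (g : nat -> gauss) (m : nat) (l h : Z).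

Hypothesis g_lazy : lazy_walk g m.
Hypothesis g_spans :
  (snd (g O) = l /\ snd (g m) = h) \/ (snd (g O) = h /\ snd (g m) = l).

(* Edge [i] of [g] meets the horizontal ray going right from [(x, y - 1/2)]. *)
Definition crosses (y x : Z) (i : nat) : bool :=
  xorb (y <=? snd (g i)) (y <=? snd (g (S i))) && (x <? fst (g i)).

Definition ray_parity (y x : Z) : bool := odd_count (crosses y x) m.

(* Points of the bottom row [l] are tested with the ray at height [l + 1/2]. *)
Definition side (z : gauss) : bool :=
  ray_parity (if l <? snd z then snd z else l + 1) (fst z).

Definition misses (z : gauss) : Prop :=
  forall i, (i <= m)%nat -> ~ (fst (g i) = fst z /\ snd (g i) = snd z).

Lemma ray_parity_left (y x : Z) : l < y <= h ->
  (forall i, (i < m)%nat -> x < fst (g i)) -> ray_parity y x = true.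
Proof.
  intros Hy Hx. unfold ray_parity.
  rewrite (odd_count_ext _ (fun i => xorb (y <=? snd (g i)) (y <=? snd (g (S i))))).
  - rewrite odd_count_telescope.
    destruct g_spans as [[-> ->] | [-> ->]]; destruct_Z_tests; reflexivity.
  - intros i Hi. unfold crosses.
    rewrite (proj2 (Z.ltb_lt _ _) (Hx i Hi)), andb_true_r. reflexivity.
Qed.

Lemma ray_parity_right (y x : Z) :
  (forall i, (i < m)%nat -> fst (g i) <= x) -> ray_parity y x = false.
Proof.
  intros Hx. apply odd_count_false. intros i Hi. unfold crosses.
  rewrite (proj2 (Z.ltb_ge _ _) (Hx i Hi)). apply andb_false_r.
Qed.

Lemma ray_parity_up (x y : Z) : l < y < h -> misses (x, y) ->
  ray_parity y x = ray_parity (y + 1) x.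
Proof.
  intros Hy Hmiss.
  set (on_row := fun i => (snd (g i) =? y) && (x <? fst (g i))).
  assert (Hedge : forall i, (i < m)%nat ->
    xorb (on_row i) (on_row (S i)) = xorb (crosses y x i) (crosses (y + 1) x i)).
  { intros i Hi. pose proof (g_lazy i Hi) as Hstep.
    pose proof (Hmiss i ltac:(lia)). pose proof (Hmiss (S i) ltac:(lia)).
    unfold lazy_step, on_row, crosses in *. cbn [fst snd] in *.
    destruct_Z_tests; reflexivity. }
  pose proof (odd_count_telescope on_row m) as Htel.
  rewrite (odd_count_ext _ _ m Hedge), (odd_count_xorb (crosses y x) (crosses (y + 1) x)) in Htel.
  assert (Hends : on_row O = false /\ on_row m = false).
  { unfold on_row. destruct g_spans as [[-> ->] | [-> ->]]; destruct_Z_tests; split; reflexivity. }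
  destruct Hends as [H0 Hm0]. rewrite H0, Hm0 in Htel. unfold ray_parity.
  destruct (odd_count (crosses y x) m), (odd_count (crosses (y + 1) x) m);
    cbn in Htel; congruence.
Qed.

Lemma ray_parity_right_shift (x y Y : Z) : (Y = y \/ Y = y + 1) -> misses (x + 1, y) ->
  ray_parity Y x = ray_parity Y (x + 1).
Proof.
  intros HY Hmiss. apply odd_count_ext. intros i Hi.
  pose proof (g_lazy i Hi) as Hstep.
  pose proof (Hmiss i ltac:(lia)). pose proof (Hmiss (S i) ltac:(lia)).
  unfold lazy_step, crosses in *. cbn [fst snd] in *. destruct_Z_tests; reflexivity.
Qed.

Lemma side_adjacent (z z' : gauss) :
  l <= snd z <= h -> l <= snd z' <= h -> lazy_step z z' ->
  misses z -> misses z' -> side z = side z'.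
Proof.
  intros Hz Hz' Hstep Hm Hm'.
  destruct z as [x y], z' as [x' y']. unfold side, lazy_step in *. cbn [fst snd] in *.
  assert (Hcases : (x' = x /\ y' = y) \/ (x' = x + 1 /\ y' = y) \/ (x = x' + 1 /\ y' = y) \/
                   (x' = x /\ y' = y + 1) \/ (x' = x /\ y = y' + 1)) by lia.
  destruct Hcases as [[-> ->] | [[-> ->] | [[-> ->] | [[-> ->] | [-> ->]]]]].
  - reflexivity.
  - apply ray_parity_right_shift with (y := y); [destruct_Z_tests; lia | exact Hm'].
  - symmetry. apply ray_parity_right_shift with (y := y); [destruct_Z_tests; lia | exact Hm].
  - destruct_Z_tests; [apply ray_parity_up; [lia | exact Hm] | f_equal; lia].
  - destruct_Z_tests; [symmetry; apply ray_parity_up; [lia | exact Hm'] | f_equal; lia].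
Qed.

Lemma side_constant (w : nat -> gauss) (M : nat) : lazy_walk w M ->
  (forall i, (i <= M)%nat -> l <= snd (w i) <= h /\ misses (w i)) ->
  forall i, (i <= M)%nat -> side (w i) = side (w O).
Proof.
  intros Hw Hin. induction i as [|i IH]; intros Hi; [reflexivity|].
  rewrite <- IH by lia.
  destruct (Hin i ltac:(lia)), (Hin (S i) Hi).
  symmetry. apply side_adjacent; auto.
Qed.

End RayParity.

Lemma exists_argmax (u : nat -> Z) (N : nat) :
  exists a, (a <= N)%nat /\ forall i, (i <= N)%nat -> u i <= u a.
Proof.
  induction N as [|N [a [Ha Hmax]]].
  - exists O. split; [lia|]. intros i Hi. replace i with O by lia. lia.
  - destruct (Z.le_gt_cases (u (S N)) (u a)).
    + exists a. split; [lia|]. intros i Hi.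
      destruct (Nat.eq_dec i (S N)) as [->|]; [lia | apply Hmax; lia].
    + exists (S N). split; [lia|]. intros i Hi.
      destruct (Nat.eq_dec i (S N)) as [->|]; [lia|]. specialize (Hmax i ltac:(lia)). lia.
Qed.

Lemma exists_argmin (u : nat -> Z) (N : nat) :
  exists a, (a <= N)%nat /\ forall i, (i <= N)%nat -> u a <= u i.
Proof.
  destruct (exists_argmax (fun i => - u i) N) as [a [Ha Hmax]].
  exists a. split; [exact Ha|]. intros i Hi. specialize (Hmax i Hi). lia.
Qed.

Lemma discrete_ivt (u : nat -> Z) (v : Z) (q p : nat) : (q <= p)%nat ->
  (forall i, (q <= i < p)%nat -> Z.abs (u (S i) - u i) <= 1) ->
  Z.min (u q) (u p) <= v <= Z.max (u q) (u p) ->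
  exists i, (q <= i <= p)%nat /\ u i = v.
Proof.
  induction p as [|p IH]; intros Hqp Hstep Hv.
  - exists O. replace q with O in Hv by lia. split; lia.
  - destruct (Z.eq_dec (u (S p)) v) as [E|Hne]; [exists (S p); split; [lia | exact E]|].
    destruct (Nat.eq_dec q (S p)) as [->|Hq]; [lia|].
    pose proof (Hstep p ltac:(lia)).
    assert (Hv' : Z.min (u q) (u p) <= v <= Z.max (u q) (u p)) by lia.
    destruct (IH ltac:(lia) (fun i Hi => Hstep i ltac:(lia)) Hv') as [i [Hi Ei]].
    exists i. split; [lia | exact Ei].
Qed.

Lemma exists_spanning_segment (f : nat -> gauss) (N : nat) :
  exists lo m l h, (lo + m <= N)%nat /\
    ((snd (f lo) = l /\ snd (f (lo + m)%nat) = h) \/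
     (snd (f lo) = h /\ snd (f (lo + m)%nat) = l)) /\
    forall i, (i <= N)%nat -> l <= snd (f i) <= h.
Proof.
  destruct (exists_argmax (fun i => snd (f i)) N) as [a [Ha Htop]].
  destruct (exists_argmin (fun i => snd (f i)) N) as [b [Hb Hbot]].
  exists (Nat.min a b), (Nat.max a b - Nat.min a b)%nat, (snd (f b)), (snd (f a)).
  split; [lia|split].
  - destruct (Nat.le_ge_cases a b).
    + rewrite Nat.min_l, Nat.max_r, Nat.add_sub_assoc, Nat.add_sub_swap, Nat.sub_diag by lia.
      right. split; reflexivity.
    + rewrite Nat.min_r, Nat.max_l, Nat.add_sub_assoc, Nat.add_sub_swap, Nat.sub_diag by lia.
      left. split; reflexivity.
  - intros i Hi. split; [apply Hbot | apply Htop]; exact Hi.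
Qed.

Lemma flat_no_chord_ge (f : nat -> gauss) (N : nat) (D E : Z) : lazy_walk f N ->
  (forall i, (i <= N)%nat -> snd (f i) = snd (f O)) -> 0 <= D <= E ->
  ~ has_chord f N D -> ~ has_chord f N E.
Proof.
  intros Hf Hflat HDE Hno [p [q [Hp [Hq Hpq]]]]. apply gsub_eq_gofZ in Hpq as [Ex Ey].
  assert (Hends : Z.min (fst (f (Nat.min p q))) (fst (f (Nat.max p q))) <= fst (f q) + D <=
                  Z.max (fst (f (Nat.min p q))) (fst (f (Nat.max p q)))).
  { destruct (Nat.le_ge_cases p q);
      [rewrite Nat.min_l, Nat.max_r | rewrite Nat.min_r, Nat.max_l]; lia. }
  destruct (discrete_ivt (fun i => fst (f i)) (fst (f q) + D) (Nat.min p q) (Nat.max p q))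
    as [i [Hi Ei]]; [lia | | exact Hends |].
  - intros i Hi. pose proof (Hf i ltac:(lia)) as Hs. unfold lazy_step in Hs. lia.
  - apply Hno. exists i, q. split; [lia | split; [exact Hq|]].
    apply gsub_eq_gofZ. rewrite (Hflat i), (Hflat q) by lia. split; [exact Ei | reflexivity].
Qed.

Definition shift (D : Z) (z : gauss) : gauss := (fst z + D, snd z).

Lemma lazy_walk_translate_segment (f : nat -> gauss) (N lo m : nat) (D : Z) : (lo + m <= N)%nat ->
  lazy_walk f N -> lazy_walk (fun i => shift D (f (lo + i)%nat)) m.
Proof.
  intros Hlm Hf i Hi. pose proof (Hf (lo + i)%nat ltac:(lia)) as Hs.
  unfold lazy_step, shift in *. cbn [fst snd]. rewrite Nat.add_succ_r. lia.
Qed.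

Lemma no_chord_add (f : nat -> gauss) (N : nat) (D J : Z) :
  lazy_walk f N -> 1 <= D -> 0 <= J ->
  ~ has_chord f N D -> ~ has_chord f N J -> ~ has_chord f N (J + D).
Proof.
  intros Hf HD HJ HnoD HnoJ.
  destruct (exists_spanning_segment f N) as [lo [m [l [h [Hlm [Hends Hstrip]]]]]].
  destruct (Z.eq_dec l h) as [Hlh|Hlh].
  { apply (flat_no_chord_ge f N D); [exact Hf | | lia | exact HnoD].
    intros i Hi. pose proof (Hstrip i Hi). pose proof (Hstrip O ltac:(lia)). lia. }
  intros [p [q [Hp [Hq Hpq]]]]. apply gsub_eq_gofZ in Hpq.
  set (gam := fun i => shift D (f (lo + i)%nat)).
  set (far := fun i => shift (J + D) (f i)).
  assert (Hgam : lazy_walk gam m) by (apply lazy_walk_translate_segment with N; assumption).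
  assert (Hspan : (snd (gam O) = l /\ snd (gam m) = h) \/ (snd (gam O) = h /\ snd (gam m) = l)).
  { unfold gam, shift; cbn [fst snd]. rewrite Nat.add_0_r. exact Hends. }
  assert (Hside_f : forall i, (i <= N)%nat -> side gam m l (f i) = side gam m l (f O)).
  { apply side_constant with h; auto.
    intros i Hi. split; [exact (Hstrip i Hi)|].
    intros j Hj [Ex Ey]. apply HnoD. exists i, (lo + j)%nat.
    split; [exact Hi | split; [lia|]]. apply gsub_eq_gofZ.
    unfold gam, shift in Ex, Ey; cbn [fst snd] in Ex, Ey. lia. }
  assert (Hside_far : forall i, (i <= N)%nat -> side gam m l (far i) = side gam m l (far O)).
  { apply side_constant with h; auto.
    - apply (lazy_walk_translate_segment f N 0 N); [lia | exact Hf].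
    - intros i Hi. unfold far, shift; cbn [fst snd]. split; [exact (Hstrip i Hi)|].
      intros j Hj [Ex Ey]. apply HnoJ. exists (lo + j)%nat, i.
      split; [lia | split; [exact Hi|]]. apply gsub_eq_gofZ.
      unfold gam, shift in Ex, Ey; cbn [fst snd] in Ex, Ey. lia. }
  destruct (exists_argmin (fun i => fst (f i)) N) as [e [He Hleft]].
  destruct (exists_argmax (fun i => fst (f i)) N) as [c [Hc Hright]].
  assert (Hin : side gam m l (f e) = true).
  { pose proof (Hstrip e He).
    apply (ray_parity_left gam m l h Hspan); [destruct_Z_tests; lia |].
    intros i Hi. unfold gam, shift; cbn [fst snd]. pose proof (Hleft (lo + i)%nat ltac:(lia)). lia. }
  assert (Hout : side gam m l (far c) = false).
  { apply (ray_parity_right gam m). intros i Hi. unfold gam, far, shift; cbn [fst snd].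
    pose proof (Hright (lo + i)%nat ltac:(lia)). lia. }
  assert (Hmeet : f p = far q).
  { unfold far, shift. rewrite (surjective_pairing (f p)). f_equal; lia. }
  rewrite Hside_f in Hin by exact He. rewrite Hside_far in Hout by exact Hc.
  rewrite <- (Hside_f p Hp), Hmeet, (Hside_far q Hq) in Hin. congruence.
Qed.

Lemma no_chord_multiple (f : nat -> gauss) (N : nat) (D j : Z) :
  lazy_walk f N -> 1 <= D -> ~ has_chord f N D -> 1 <= j -> ~ has_chord f N (j * D).
Proof.
  intros Hf HD Hno Hj.
  replace j with (Z.of_nat (Z.to_nat (j - 1)) + 1) by lia.
  induction (Z.to_nat (j - 1)) as [|t IH].
  - replace ((Z.of_nat 0 + 1) * D) with D by lia. exact Hno.
  - replace ((Z.of_nat (S t) + 1) * D) with ((Z.of_nat t + 1) * D + D) by lia.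
    apply no_chord_add; [exact Hf | exact HD | nia | exact Hno | exact IH].
Qed.

(* Step [i] of [f] becomes steps [k i], ..., [k i + k - 1]: a horizontal step is
   spread over [k] unit steps, a vertical one is taken first and followed by
   [k - 1] pauses. *)
Definition stretch (f : nat -> gauss) (k : nat) (j : nat) : gauss :=
  let i := (j / k)%nat in
  let t := Z.of_nat (j mod k) in
  (Z.of_nat k * fst (f i) + t * (fst (f (S i)) - fst (f i)),
   if t =? 0 then snd (f i) else snd (f (S i))).

Lemma stretch_at (f : nat -> gauss) (k i t : nat) : (t < k)%nat ->
  stretch f k (k * i + t) =
  (Z.of_nat k * fst (f i) + Z.of_nat t * (fst (f (S i)) - fst (f i)),
   if Z.of_nat t =? 0 then snd (f i) else snd (f (S i))).
Proof.
  intros Ht. unfold stretch.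
  replace ((k * i + t) / k)%nat with i by (apply Nat.div_unique with t; lia).
  replace ((k * i + t) mod k)%nat with t by (apply Nat.mod_unique with i; lia).
  reflexivity.
Qed.

Lemma stretch_mul (f : nat -> gauss) (k i : nat) : (1 <= k)%nat ->
  stretch f k (k * i) = (Z.of_nat k * fst (f i), snd (f i)).
Proof.
  intros Hk. rewrite <- (Nat.add_0_r (k * i)), stretch_at by lia. f_equal. lia.
Qed.

Lemma nat_div_mod_decomp (k j : nat) : (1 <= k)%nat ->
  exists i t, (t < k)%nat /\ j = (k * i + t)%nat.
Proof.
  intros Hk. exists (j / k)%nat, (j mod k)%nat. split.
  - apply Nat.mod_upper_bound. lia.
  - apply Nat.div_mod. lia.
Qed.

Lemma stretch_lazy (f : nat -> gauss) (k N : nat) : (1 <= k)%nat ->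
  lazy_walk f N -> lazy_walk (stretch f k) (k * N).
Proof.
  intros Hk Hf j Hj.
  destruct (nat_div_mod_decomp k j Hk) as [i [t [Ht ->]]].
  assert (Hi : (i < N)%nat) by nia.
  pose proof (Hf i Hi) as Hs. unfold lazy_step in *.
  destruct (Nat.eq_dec (S t) k) as [Et|Et].
  - replace (S (k * i + t)) with (k * S i)%nat by nia.
    rewrite stretch_mul, stretch_at by lia. cbn [fst snd].
    replace (Z.of_nat t) with (Z.of_nat k - 1) by lia.
    destruct_Z_tests; lia.
  - replace (S (k * i + t)) with (k * i + S t)%nat by lia.
    rewrite !stretch_at by lia. cbn [fst snd]. destruct_Z_tests; lia.
Qed.

Lemma stretch_point (f : nat -> gauss) (k N j : nat) : (1 <= k)%nat ->
  lazy_walk f N -> (j <= k * N)%nat ->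
  exists x e, fst (stretch f k j) = Z.of_nat k * x + e /\ 0 <= e < Z.of_nat k /\
    visits f N (x, snd (stretch f k j)) /\
    (0 < e -> visits f N (x + 1, snd (stretch f k j))).
Proof.
  intros Hk Hf Hj. destruct (nat_div_mod_decomp k j Hk) as [i [t [Ht ->]]].
  rewrite stretch_at by exact Ht. cbn [fst snd].
  destruct (Nat.eq_dec t 0) as [->|Ht0].
  { exists (fst (f i)), 0. cbn. split; [ring | split; [lia | split; [|lia]]].
    apply (visits_intro f N i); cbn; [nia | reflexivity | reflexivity]. }
  assert (Hi : (i < N)%nat) by nia.
  pose proof (Hf i Hi) as Hs. unfold lazy_step in Hs.
  destruct_Z_tests.
  assert (Hdx : fst (f (S i)) = fst (f i) \/ fst (f (S i)) = fst (f i) + 1 \/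
                fst (f (S i)) = fst (f i) - 1) by lia.
  destruct Hdx as [Hdx | [Hdx | Hdx]]; rewrite Hdx.
  - exists (fst (f i)), 0. split; [ring | split; [lia | split; [|lia]]].
    apply (visits_intro f N (S i)); cbn; lia.
  - exists (fst (f i)), (Z.of_nat t). split; [ring | split; [lia | split]].
    + apply (visits_intro f N i); cbn; lia.
    + intros _. apply (visits_intro f N (S i)); cbn; lia.
  - exists (fst (f i) - 1), (Z.of_nat k - Z.of_nat t). split; [ring | split; [lia | split]].
    + apply (visits_intro f N (S i)); cbn; lia.
    + intros _. apply (visits_intro f N i); cbn; lia.
Qed.

Lemma stretch_chord (f : nat -> gauss) (k N : nat) (D : Z) : (1 <= k)%nat ->
  has_chord f N D -> has_chord (stretch f k) (k * N) (Z.of_nat k * D).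
Proof.
  intros Hk [p [q [Hp [Hq Hpq]]]]. apply gsub_eq_gofZ in Hpq.
  exists (k * p)%nat, (k * q)%nat. split; [nia | split; [nia|]].
  apply gsub_eq_gofZ. rewrite !stretch_mul by exact Hk. cbn [fst snd]. split; nia.
Qed.

Lemma stretch_no_chord (f : nat -> gauss) (k N : nat) (d n r : Z) : (1 <= k)%nat ->
  lazy_walk f N -> n = Z.of_nat k * d + r -> Z.abs r < Z.of_nat k ->
  ~ has_chord f N d -> ~ has_chord (stretch f k) (k * N) n.
Proof.
  intros Hk Hf Hn Hr Hno [p [q [Hp [Hq Hpq]]]]. apply gsub_eq_gofZ in Hpq as [Ex Ey].
  destruct (stretch_point f k N p Hk Hf Hp) as [x2 [e2 [X2 [E2 [P2 Q2]]]]].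
  destruct (stretch_point f k N q Hk Hf Hq) as [x1 [e1 [X1 [E1 [P1 Q1]]]]].
  rewrite Ey in P2, Q2. apply Hno.
  assert (Hc : Z.of_nat k * (x2 - x1 - d) = r + e1 - e2) by lia.
  destruct (Z.lt_trichotomy (x2 - x1 - d) 0) as [Hneg | [Hzero | Hpos]].
  - assert (Hx : x2 + 1 = x1 + d) by nia.
    assert (He2 : 0 < e2) by nia.
    apply (chord_of_visits f N d x1 (snd (stretch f k q))); [|exact P1].
    rewrite <- Hx. exact (Q2 He2).
  - apply (chord_of_visits f N d x1 (snd (stretch f k q))); [|exact P1].
    replace (x1 + d) with x2 by lia. exact P2.
  - assert (Hx : x2 = x1 + 1 + d) by nia.
    assert (He1 : 0 < e1) by nia.
    apply (chord_of_visits f N d (x1 + 1) (snd (stretch f k q))); [|exact (Q1 He1)].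
    rewrite <- Hx. exact P2.
Qed.

Fixpoint chain {A : Type} (R : A -> A -> Prop) (l : list A) : Prop :=
  match l with
  | a :: ((b :: _) as t) => R a b /\ chain R t
  | _ => True
  end.

Definition unit_step (z z' : gauss) : Prop := gnorm2 (gsub z' z) = 1.

Lemma walk_of_chain (w : list gauss) : w <> [] -> chain unit_step w -> is_walk w.
Proof.
  intros Hne Hc. split; [exact Hne|]. clear Hne.
  induction w as [|a t IH]; intros j Hj; cbn in Hj; [lia|].
  destruct t as [|b t']; cbn in Hj; [lia|].
  destruct Hc as [Hab Hc]. destruct j as [|j]; [exact Hab|].
  apply (IH Hc j). cbn. lia.
Qed.

Lemma chain_app {A : Type} (R : A -> A -> Prop) (x0 : A) (l1 l2 : list A) :
  l1 <> [] -> l2 <> [] -> chain R l1 -> chain R l2 ->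
  R (last l1 x0) (hd x0 l2) -> chain R (l1 ++ l2).
Proof.
  induction l1 as [|a [|c t] IH]; intros H1 H2 C1 C2 Hjoin; [congruence | |].
  - destruct l2 as [|b l2]; [congruence|]. split; assumption.
  - destruct C1 as [Hac C1]. split; [exact Hac|]. apply IH; [discriminate | assumption..].
Qed.

Lemma chain_map_seq {A : Type} (R : A -> A -> Prop) (F : nat -> A) (s M : nat) :
  (forall i, (s <= i < s + M)%nat -> R (F i) (F (S i))) -> chain R (map F (seq s (S M))).
Proof.
  revert s. induction M as [|M IH]; intros s H; cbn; [exact I|].
  split; [apply H; lia|]. apply (IH (S s)). intros i Hi. apply H. lia.
Qed.

Lemma last_map_seq {A : Type} (F : nat -> A) (x0 : A) (s M : nat) :
  last (map F (seq s (S M))) x0 = F (s + M)%nat.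
Proof.
  revert s. induction M as [|M IH]; intros s; [cbn; f_equal; lia|].
  change (map F (seq s (S (S M)))) with (F s :: map F (seq (S s) (S M))).
  rewrite <- Nat.add_succ_comm, <- (IH (S s)). reflexivity.
Qed.

Lemma last_app_nonempty {A : Type} (x0 : A) (l1 l2 : list A) :
  l2 <> [] -> last (l1 ++ l2) x0 = last l2 x0.
Proof.
  intros H. induction l1 as [|a t IH]; [reflexivity|].
  cbn. rewrite IH. destruct (t ++ l2) eqn:E; [|reflexivity].
  apply app_eq_nil in E. tauto.
Qed.

Lemma In_last {A : Type} (x0 : A) (l : list A) : l <> [] -> In (last l x0) l.
Proof.
  intros H. rewrite (app_removelast_last x0 H) at 2. apply in_or_app. right. left. reflexivity.
Qed.

Definition column (x a b : Z) : list gauss :=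
  map (fun i => (x, a + Z.sgn (b - a) * Z.of_nat i)) (seq 0 (S (Z.to_nat (Z.abs (b - a))))).

Lemma column_hd (x a b : Z) : hd (0, 0) (column x a b) = (x, a).
Proof. cbn. f_equal. ring. Qed.

Lemma column_last (x a b : Z) : last (column x a b) (0, 0) = (x, b).
Proof.
  unfold column. rewrite last_map_seq. cbn. f_equal.
  destruct (Z.lt_trichotomy (b - a) 0) as [L | [L | L]].
  - rewrite (Z.sgn_neg _ L). lia.
  - rewrite L. cbn. lia.
  - rewrite (Z.sgn_pos _ L). lia.
Qed.

Lemma column_chain (x a b : Z) : chain unit_step (column x a b).
Proof.
  apply chain_map_seq. intros i Hi. unfold unit_step, gsub, gnorm2; cbn [fst snd].
  rewrite Nat2Z.inj_succ.
  destruct (Z.lt_trichotomy (b - a) 0) as [L | [L | L]]; [| lia |].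
  - rewrite (Z.sgn_neg _ L). ring.
  - rewrite (Z.sgn_pos _ L). ring.
Qed.

Lemma In_column (x a b : Z) (z : gauss) : In z (column x a b) ->
  fst z = x /\ Z.min a b <= snd z <= Z.max a b.
Proof.
  unfold column. rewrite in_map_iff. intros [i [<- Hi]]. rewrite in_seq in Hi.
  cbn. split; [reflexivity|].
  destruct (Z.lt_trichotomy (b - a) 0) as [L | [L | L]].
  - rewrite (Z.sgn_neg _ L). lia.
  - rewrite L. lia.
  - rewrite (Z.sgn_pos _ L). lia.
Qed.

Fixpoint staircase (G : Z -> Z) (m : nat) (x : Z) : list gauss :=
  match m with
  | O => column x (G x) (G (x + 1))
  | S m' => column x (G x) (G (x + 1)) ++ staircase G m' (x + 1)
  end.

Lemma staircase_nonempty (G : Z -> Z) (m : nat) (x : Z) : staircase G m x <> [].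
Proof. destruct m; discriminate. Qed.

Lemma staircase_hd (G : Z -> Z) (m : nat) (x : Z) : hd (0, 0) (staircase G m x) = (x, G x).
Proof. destruct m; apply column_hd. Qed.

Lemma staircase_last (G : Z -> Z) (m : nat) (x : Z) :
  last (staircase G m x) (0, 0) = (x + Z.of_nat m, G (x + Z.of_nat m + 1)).
Proof.
  revert x. induction m as [|m IH]; intros x; cbn [staircase].
  - rewrite column_last. f_equal; [lia | f_equal; lia].
  - rewrite last_app_nonempty, IH by apply staircase_nonempty. f_equal; [lia | f_equal; lia].
Qed.

Lemma staircase_chain (G : Z -> Z) (m : nat) (x : Z) : chain unit_step (staircase G m x).
Proof.
  revert x. induction m as [|m IH]; intros x; cbn [staircase]; [apply column_chain|].
  apply (chain_app _ (0, 0)); [discriminate | apply staircase_nonempty | apply column_chain | apply IH |].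
  rewrite column_last, staircase_hd. unfold unit_step, gsub, gnorm2. cbn. ring.
Qed.

Lemma In_staircase (G : Z -> Z) (m : nat) (x : Z) (z : gauss) : In z (staircase G m x) ->
  exists c, x <= c <= x + Z.of_nat m /\ fst z = c /\
    Z.min (G c) (G (c + 1)) <= snd z <= Z.max (G c) (G (c + 1)).
Proof.
  revert x. induction m as [|m IH]; intros x Hz; cbn [staircase] in Hz.
  - apply In_column in Hz. exists x. split; [lia | exact Hz].
  - apply in_app_or in Hz as [Hz | Hz].
    + apply In_column in Hz. exists x. split; [lia | exact Hz].
    + destruct (IH (x + 1) Hz) as [c [Hc Hcz]]. exists c. split; [lia | exact Hcz].
Qed.

Lemma staircase_avoidable (G : Z -> Z) (n d : Z) : 1 <= n -> G 0 = 0 -> G (n + 1) = 0 ->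
  (forall c, 0 <= c -> c + d <= n ->
     Z.max (G (c + d)) (G (c + d + 1)) < Z.min (G c) (G (c + 1))) ->
  avoidable n d.
Proof.
  intros Hn G0 Gn Hgap.
  set (w := staircase G (Z.to_nat n) 0).
  assert (Hw : w <> []) by apply staircase_nonempty.
  assert (Hend : last w (0, 0) = (n, 0)).
  { unfold w. rewrite staircase_last, Z2Nat.id by lia. rewrite Z.add_0_l, Gn. reflexivity. }
  assert (Hstart : hd (0, 0) w = (0, 0)) by (unfold w; rewrite staircase_hd, G0; reflexivity).
  apply (avoidable_of_walk w (n, 0) (0, 0)).
  - apply walk_of_chain; [exact Hw | apply staircase_chain].
  - rewrite <- Hend. apply In_last, Hw.
  - rewrite <- Hstart. destruct w; [congruence | left; reflexivity].
  - apply gsub_eq_gofZ. cbn. lia.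
  - intros z z' Hz Hz' E. apply gsub_eq_gofZ in E.
    apply In_staircase in Hz as [c1 [Hc1 [Ex1 Ey1]]].
    apply In_staircase in Hz' as [c2 [Hc2 [Ex2 Ey2]]].
    rewrite Z2Nat.id in Hc1, Hc2 by lia.
    replace c1 with (c2 + d) in Ey1 by lia.
    pose proof (Hgap c2 ltac:(lia) ltac:(lia)). lia.
Qed.

(* With c = ceil (x / (d + 1)), this tests c (d - 1) + 1 <= x, i.e. whether x
   lies in one of the blocks [c (d - 1) + 1, c (d + 1)], c >= 1, formed by the
   points reachable from 0 by moves of length d - 1, d or d + 1, the first of
   length d or d + 1. *)
Definition ladder (d x : Z) : bool := (x + d) / (d + 1) * (d - 1) + 1 <=? x.

Definition potential (n d x : Z) : Z :=
  if (x =? 0) || (x =? n + 1) then 0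
  else if ladder d x then - (x / (d - 1)) else (n + 1 - x) / (d - 1).

Lemma Z_div_eq_of_bounds (a b q : Z) : 0 < b -> q * b <= a < (q + 1) * b -> a / b = q.
Proof.
  intros Hb Ha. symmetry. apply Z.div_unique_pos with (a - b * q); lia.
Qed.

Lemma Z_div_add_le (x y q : Z) : 0 < q -> 0 <= y -> y + q <= x -> y / q + 1 <= x / q.
Proof.
  intros Hq Hy Hxy. rewrite <- (Z.div_add y 1 q) by lia. apply Z.div_le_mono; lia.
Qed.

Lemma potential_inner (n d x : Z) : x <> 0 -> x <> n + 1 ->
  potential n d x = if ladder d x then - (x / (d - 1)) else (n + 1 - x) / (d - 1).
Proof.
  intros H0 Hn. unfold potential.
  rewrite (proj2 (Z.eqb_neq _ _) H0), (proj2 (Z.eqb_neq _ _) Hn). reflexivity.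
Qed.

Lemma ladder_move (d a b : Z) : 3 <= d -> 1 <= a -> ladder d a = true ->
  d - 1 <= b - a <= d + 1 -> ladder d b = true.
Proof.
  unfold ladder. rewrite !Z.leb_le. intros Hd Ha Hlad Hab.
  assert ((b + d) / (d + 1) <= (a + d) / (d + 1) + 1).
  { rewrite <- (Z.div_add (a + d) 1 (d + 1)) by lia. apply Z.div_le_mono; lia. }
  assert (0 <= (b + d) / (d + 1)) by (apply Z.div_pos; lia).
  nia.
Qed.

Lemma ladder_first_move (d b : Z) : 3 <= d -> (b = d \/ b = d + 1) -> ladder d b = true.
Proof.
  intros Hd Hb. unfold ladder. rewrite Z.leb_le.
  rewrite (Z_div_eq_of_bounds (b + d) (d + 1) 1) by lia. lia.
Qed.

Lemma potential_drops (n d a b : Z) : 3 <= d -> d + 1 <= n ->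
  ladder d (n - d) = false -> ladder d (n + 1 - d) = false ->
  0 <= a -> b <= n + 1 -> d - 1 <= b - a <= d + 1 ->
  (a = 0 -> d <= b - a) -> (b = n + 1 -> d <= b - a) ->
  potential n d b < potential n d a.
Proof.
  intros Hd Hn Hoff1 Hoff2 Ha Hb Hab Hstart Hend.
  assert (Hq : 0 < d - 1) by lia.
  destruct (Z.eq_dec a 0) as [-> | Ha0].
  { specialize (Hstart eq_refl).
    rewrite potential_inner, ladder_first_move by lia.
    assert (1 <= b / (d - 1)) by (apply Z.div_le_lower_bound; lia).
    unfold potential. cbn. lia. }
  destruct (Z.eq_dec b (n + 1)) as [-> | Hbn].
  { specialize (Hend eq_refl).
    assert (Hoff : ladder d a = false).
    { assert (Hlast : a = n - d \/ a = n + 1 - d) by lia.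
      destruct Hlast as [-> | ->]; assumption. }
    rewrite (potential_inner n d a), Hoff by lia.
    assert (1 <= (n + 1 - a) / (d - 1)) by (apply Z.div_le_lower_bound; lia).
    unfold potential. rewrite Z.eqb_refl, orb_true_r. lia. }
  rewrite (potential_inner n d a), (potential_inner n d b) by lia.
  destruct (ladder d a) eqn:Hla.
  - rewrite (ladder_move d a b) by (assumption || lia).
    pose proof (Z_div_add_le b a (d - 1) Hq ltac:(lia) ltac:(lia)). lia.
  - assert (0 <= (n + 1 - a) / (d - 1)) by (apply Z.div_pos; lia).
    destruct (ladder d b).
    + assert (1 <= b / (d - 1)) by (apply Z.div_le_lower_bound; lia). lia.
    + pose proof (Z_div_add_le (n + 1 - a) (n + 1 - b) (d - 1) Hq ltac:(lia) ltac:(lia)). lia.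
Qed.

Lemma potential_column_gap (n d c : Z) : 3 <= d -> d + 1 <= n ->
  ladder d (n - d) = false -> ladder d (n + 1 - d) = false -> 0 <= c -> c + d <= n ->
  Z.max (potential n d (c + d)) (potential n d (c + d + 1)) <
  Z.min (potential n d c) (potential n d (c + 1)).
Proof.
  intros. apply Z.max_lub_lt; apply Z.min_glb_lt; apply potential_drops; auto; lia.
Qed.

Lemma small_quotient_setting (n d k r : Z) : 1 <= d -> d <= n -> n = k * d + r ->
  - (d / 2) <= r -> r <= (d + 1) / 2 - 1 -> k <= Z.abs r ->
  3 <= d /\ d + 1 <= n /\ ladder d (n - d) = false /\ ladder d (n + 1 - d) = false.
Proof.
  intros Hd Hn Hnkr Hlo Hhi Hk.
  assert (2 * (d / 2) <= d) by (apply Z.mul_div_le; lia).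
  assert (2 * ((d + 1) / 2) <= d + 1) by (apply Z.mul_div_le; lia).
  assert (Hk1 : 1 <= k) by (destruct (Z.le_gt_cases k 0); [nia | lia]).
  assert (Hd3 : 3 <= d).
  { destruct (Z.eq_dec d 1) as [-> | ]; [lia|].
    destruct (Z.eq_dec d 2) as [-> | ]; [| lia].
    assert (r = -1) by lia. lia. }
  assert (Hnd : d + 1 <= n).
  { destruct (Z.eq_dec k 1) as [-> | ]; [lia|]. nia. }
  (* n - d + e lies in the gap just before ladder block k - 1 if r < 0, and
     just before block k if r > 0. *)
  assert (Hoff : forall e, 0 <= e <= 1 -> ladder d (n - d + e) = false).
  { intros e He. unfold ladder. apply Z.leb_gt.
    destruct (Z.lt_trichotomy r 0) as [Rneg | [R0 | Rpos]]; [| lia |].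
    - rewrite (Z_div_eq_of_bounds (n - d + e + d) (d + 1) (k - 1)); nia.
    - rewrite (Z_div_eq_of_bounds (n - d + e + d) (d + 1) k); nia. }
  split; [exact Hd3 | split; [exact Hnd | split]].
  - rewrite <- (Z.add_0_r (n - d)). apply Hoff. lia.
  - replace (n + 1 - d) with (n - d + 1) by ring. apply Hoff. lia.
Qed.

Theorem mainTheorem1 (n d k r : Z) (hn : 1 <= n) (hd : 1 <= d)
  (hnkr : n = k * d + r)
  (hrlo : - (d / 2) <= r) (hrhi : r <= (d + 1) / 2 - 1) :
  A n d <-> Z.abs r + 1 <= k.
Proof.
  split.
  - intros [_ Hnot]. apply Z.nlt_ge. intros Hk. apply Hnot.
    apply staircase_avoidable with (G := potential n d); [exact hn | reflexivity | |].
    + unfold potential. rewrite Z.eqb_refl, orb_true_r. reflexivity.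
    + intros c Hc Hcd.
      destruct (small_quotient_setting n d k r hd ltac:(lia) hnkr hrlo hrhi ltac:(lia))
        as [Hd3 [Hnd [Hoff1 Hoff2]]].
      apply potential_column_gap; assumption.
  - intros Hk. split; [exact hd|]. intros Hav.
    destruct (avoidable_lazy_walk n d Hav) as [f [N [Hf [Hchord Hno]]]].
    assert (Hk1 : (1 <= Z.to_nat k)%nat) by lia.
    apply (no_chord_multiple (stretch f (Z.to_nat k)) (Z.to_nat k * N) n k).
    + apply stretch_lazy; assumption.
    + exact hn.
    + apply (stretch_no_chord f (Z.to_nat k) N d n r); try assumption; rewrite Z2Nat.id; lia.
    + lia.
    + replace (k * n) with (Z.of_nat (Z.to_nat k) * n) by lia.
      apply stretch_chord; assumption.
Qed.
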